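(* Let $a,b\in\{1,2,3\}$ with $a\neq b$, and let $P\in R$ not depend on $x_{a4}$ and satisfy $DP=D_1P=D_2P=D_3P=D_4P=0$. Then there exists $Q\in R$ not depending on $x_{a4}$ with $\partial_{b4}Q=P$ and $DQ=D_1Q=D_2Q=D_3Q=D_4Q=0$.
   Context: $R=\mathbb C[x_1,x_2,x_3,x_4,x_{12},x_{13},x_{14},x_{23},x_{24},x_{34}]$ (i.e. $\mathrm{Sym}(\mathbb C^4)\otimes\mathrm{Sym}(\Lambda^2\mathbb C^4)$), $\partial_i=\partial/\partial x_i$, $\partial_{ij}=\partial/\partial x_{ij}$, $D=\partial_{12}\partial_{34}-\partial_{13}\partial_{24}+\partial_{14}\partial_{23}$, $D_1=\partial_{23}\partial_4-\partial_{24}\partial_3+\partial_{34}\partial_2$, $D_2=\partial_{13}\partial_4-\partial_{14}\partial_3+\partial_{34}\partial_1$, $D_3=\partial_{12}\partial_4-\partial_{14}\partial_2+\partial_{24}\partial_1$, $D_4=\partial_{12}\partial_3-\partial_{13}\partial_2+\partial_{23}\partial_1$. *)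

(* polynomial ring R = C[x1..x4, x12,...,x34] as {mpoly C[10]},
   with C := R[i] (complex numbers over an arbitrary realType R, i.e. over the reals). *)
From mathcomp Require Import all_boot all_algebra.
From mathcomp Require Import reals.
From mathcomp.real_closed Require Import complex.
From mathcomp Require Import mpoly.
Set Implicit Arguments. Unset Strict Implicit. Unset Printing Implicit Defensive.
Import GRing.Theory.
Local Open Scope ring_scope.

(* Variable indexing (0-based):
   x1 x2 x3 x4 x12 x13 x14 x23 x24 x34
    0  1  2  3   4   5   6   7   8   9 *)
Definition vx (i : nat) : 'I_10 := inord i.-1.
Definition vxx (i j : nat) : 'I_10 :=                   (* x_ij, i<j *)
  inord (match i, j with
         | 1, 2 => 4 | 1, 3 => 5 | 1, 4 => 6
         | 2, 3 => 7 | 2, 4 => 8 | _, _ => 9 end).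

Section Ops.
Variable C : comRingType.
Notation RR := {mpoly C[10]}.

Definition d1 (i : nat) (p : RR) : RR := mderiv (vx i) p.
Definition d2 (i j : nat) (p : RR) : RR := mderiv (vxx i j) p.

Definition Dop (p : RR) : RR :=
  d2 1 2 (d2 3 4 p) - d2 1 3 (d2 2 4 p) + d2 1 4 (d2 2 3 p).
Definition D1op (p : RR) : RR :=
  d2 2 3 (d1 4 p) - d2 2 4 (d1 3 p) + d2 3 4 (d1 2 p).
Definition D2op (p : RR) : RR :=
  d2 1 3 (d1 4 p) - d2 1 4 (d1 3 p) + d2 3 4 (d1 1 p).
Definition D3op (p : RR) : RR :=
  d2 1 2 (d1 4 p) - d2 1 4 (d1 2 p) + d2 2 4 (d1 1 p).
Definition D4op (p : RR) : RR :=
  d2 1 2 (d1 3 p) - d2 1 3 (d1 2 p) + d2 2 3 (d1 1 p).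

Definition indep_of (v : 'I_10) (p : RR) : Prop :=
  forall m, m \in msupp p -> m v = 0%N.

Definition annihilated (p : RR) : Prop :=
  [/\ Dop p = 0, D1op p = 0, D2op p = 0, D3op p = 0 & D4op p = 0].
End Ops.

(* Taylor coefficients turn the five operators into the five Plücker relations
   of the Grassmannian G(2,5), read on the 10 variables as Plücker coordinates:
   [F] is annihilated iff [m |-> tcoef F m] satisfies them.  Products of the
   2 x 2 minors of a 2 x 5 matrix satisfy these relations, so reading off their
   coefficients gives solutions [sol n g]; killing the first-row entries of the
   two columns of x_a4 makes them independent of x_a4, and the minor of x_b4
   becomes a monomial, so that [sol] is integrated in x_b4 by shifting [g].
   These solutions span: by straightening, a solution independent of x_a4 is
   determined by its values on standard monomials, and the leading monomials of
   the corresponding products of minors are pairwise distinct, which makes the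
   elimination triangular. *)

From mathcomp Require Import all_boot all_order all_algebra.
From mathcomp Require Import reals.
From mathcomp.real_closed Require Import complex.
From mathcomp Require Import mpoly.
From mathcomp Require Import ring.
Set Implicit Arguments. Unset Strict Implicit. Unset Printing Implicit Defensive.
Import Order.TTheory GRing.Theory Num.Theory.
Local Open Scope ring_scope.

Section TaylorCoefficients.
Variables (n : nat) (C : numFieldType).
Implicit Types (F : {mpoly C[n]}) (m : 'X_{1..n}).

Definition mfact m : nat := \prod_(i < n) (m i)`!.

Lemma mfact_gt0 m : (0 < mfact m)%N.
Proof. by apply/prodn_gt0 => i; apply: fact_gt0. Qed.

Lemma mfact_addU m i : mfact (m + U_(i))%MM = (mfact m * (m i).+1)%N.
Proof.
rewrite /mfact (bigD1 i) //= [in RHS](bigD1 i) //= mnmDE mnm1E eqxx addn1 factS.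
rewrite (eq_bigr (fun j => (m j)`!)); last first.
  by move=> j ne; rewrite mnmDE mnm1E eq_sym (negbTE ne) addn0.
by rewrite [RHS]mulnC mulnA.
Qed.

(* [tcoef F m] is the value at 0 of the derivative of [F] of multi-order [m]. *)
Definition tcoef F m : C := F@_m * (mfact m)%:R.

Lemma tcoef_mderiv F i m : tcoef (mderiv i F) m = tcoef F (m + U_(i)).
Proof.
by rewrite /tcoef mcoeff_mderiv mfact_addU natrM mulrA !mulr_natr -!mulrnA mulnC.
Qed.

Lemma mfactr_neq0 m : (mfact m)%:R != 0 :> C.
Proof. by rewrite pnatr_eq0 eqn0Ngt mfact_gt0. Qed.

Lemma tcoef_eq0 F m : (tcoef F m == 0) = (F@_m == 0).
Proof. by rewrite mulf_eq0 (negbTE (mfactr_neq0 m)) orbF. Qed.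

Lemma tcoef0 m : tcoef 0 m = 0.
Proof. by rewrite /tcoef mcoeff0 mul0r. Qed.

Lemma tcoefD F1 F2 m : tcoef (F1 + F2) m = tcoef F1 m + tcoef F2 m.
Proof. by rewrite /tcoef mcoeffD mulrDl. Qed.

Lemma tcoefB F1 F2 m : tcoef (F1 - F2) m = tcoef F1 m - tcoef F2 m.
Proof. by rewrite /tcoef mcoeffB mulrBl. Qed.

Lemma tcoefZ c F m : tcoef (c *: F) m = c * tcoef F m.
Proof. by rewrite /tcoef mcoeffZ mulrA. Qed.

Lemma tcoefP F1 F2 : (forall m, tcoef F1 m = tcoef F2 m) -> F1 = F2.
Proof. by move=> h; apply/mpolyP => m; apply: (mulIf (mfactr_neq0 m)); apply: h. Qed.

End TaylorCoefficients.

Definition x1 : 'I_10 := @Ordinal 10 0 isT.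
Definition x2 : 'I_10 := @Ordinal 10 1 isT.
Definition x3 : 'I_10 := @Ordinal 10 2 isT.
Definition x4 : 'I_10 := @Ordinal 10 3 isT.
Definition x12 : 'I_10 := @Ordinal 10 4 isT.
Definition x13 : 'I_10 := @Ordinal 10 5 isT.
Definition x14 : 'I_10 := @Ordinal 10 6 isT.
Definition x23 : 'I_10 := @Ordinal 10 7 isT.
Definition x24 : 'I_10 := @Ordinal 10 8 isT.
Definition x34 : 'I_10 := @Ordinal 10 9 isT.

Lemma vxE : (vx 1 = x1) * (vx 2 = x2) * (vx 3 = x3) * (vx 4 = x4)
  * (vxx 1 2 = x12) * (vxx 1 3 = x13) * (vxx 1 4 = x14)
  * (vxx 2 3 = x23) * (vxx 2 4 = x24) * (vxx 3 4 = x34).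
Proof. by do !split; apply/val_inj; rewrite /= inordK. Qed.

Definition k0 : 'I_3 := @Ordinal 3 0 isT.
Definition k1 : 'I_3 := @Ordinal 3 1 isT.
Definition k2 : 'I_3 := @Ordinal 3 2 isT.

(* Row [r] lists the three terms of [Dop], [D1op], ..., [D4op]. *)
Definition pterm (r : 'I_5) (k : 'I_3) : 'I_10 * 'I_10 :=
  match val r, val k with
  | 0, 0 => (x12, x34) | 0, 1 => (x13, x24) | 0, _ => (x14, x23)
  | 1, 0 => (x23, x4)  | 1, 1 => (x24, x3)  | 1, _ => (x34, x2)
  | 2, 0 => (x13, x4)  | 2, 1 => (x14, x3)  | 2, _ => (x34, x1)
  | 3, 0 => (x12, x4)  | 3, 1 => (x14, x2)  | 3, _ => (x24, x1)
  | _, 0 => (x12, x3)  | _, 1 => (x13, x2)  | _, _ => (x23, x1)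
  end.

Section PluckerRelations.
Variable V : zmodType.
Implicit Types g : 'X_{1..10} -> V.

Definition pshift g r m k := g (m + U_((pterm r k).1) + U_((pterm r k).2))%MM.

Definition plucker_rel g :=
  forall r m, pshift g r m k0 - pshift g r m k1 + pshift g r m k2 = 0.

Lemma plucker_rel_other g r m (k : 'I_3) : plucker_rel g ->
  (forall k', k' != k -> pshift g r m k' = 0) -> pshift g r m k = 0.
Proof.
move=> /(_ r m); case: k => [[|[|[|//]]] ?] rel h.
- by rewrite (h k1) // (h k2) // subr0 addr0 in rel.
- by move: rel; rewrite (h k0) // (h k2) // sub0r addr0 => /eqP; rewrite oppr_eq0 => /eqP.
- by rewrite (h k0) // (h k1) // subr0 add0r in rel.
Qed.

End PluckerRelations.

Section Annihilators.
Variable C : numFieldType.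
Implicit Type F : {mpoly C[10]}.

Definition pluckerD (r : 'I_5) F :=
  let d k := mderiv (pterm r k).1 (mderiv (pterm r k).2 F) in d k0 - d k1 + d k2.

Lemma tcoef_pluckerD r F m :
  tcoef (pluckerD r F) m =
  pshift (tcoef F) r m k0 - pshift (tcoef F) r m k1 + pshift (tcoef F) r m k2.
Proof. by rewrite tcoefD tcoefB !tcoef_mderiv. Qed.

Lemma annihilated_pluckerD F : annihilated F <-> forall r, pluckerD r F = 0.
Proof.
rewrite /annihilated /Dop /D1op /D2op /D3op /D4op /d1 /d2 !vxE; split.
  by case=> ? ? ? ? ? [[|[|[|[|[|//]]]]] ?].
by move=> h; split; [exact: (h 0%R) | exact: (h 1%R) | exact: (h 2%R)
  | exact: (h 3%R) | exact: (h 4%R)].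
Qed.

Lemma annihilatedE F : annihilated F <-> plucker_rel (tcoef F).
Proof.
rewrite annihilated_pluckerD; split=> [h r m | h r].
  by rewrite -tcoef_pluckerD h tcoef0.
by apply: tcoefP => m; rewrite tcoef_pluckerD h tcoef0.
Qed.

Lemma pluckerD_lin r F1 F2 c :
  pluckerD r (F1 + c *: F2) = pluckerD r F1 + c *: pluckerD r F2.
Proof.
by rewrite /pluckerD /= !(mderivD, mderivZ) -!mul_mpolyC; ring.
Qed.

Lemma annihilated0 : annihilated (0 : {mpoly C[10]}).
Proof. by apply/annihilated_pluckerD => r; rewrite /pluckerD /= !mderiv0 subrr addr0. Qed.

Lemma annihilated_lin F1 F2 c :
  annihilated F1 -> annihilated F2 -> annihilated (F1 + c *: F2).
Proof.
by rewrite !annihilated_pluckerD => h1 h2 r; rewrite pluckerD_lin h1 h2 scaler0 addr0.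
Qed.

End Annihilators.

Lemma indep_of_lin (C : comRingType) v (F1 F2 : {mpoly C[10]}) c :
  indep_of v F1 -> indep_of v F2 -> indep_of v (F1 + c *: F2).
Proof.
by move=> h1 h2 m /msuppD_le; rewrite mem_cat => /orP [/h1 | /msuppZ_le /h2].
Qed.

Lemma sum_ord_eq n (P : nat -> nat) k : (k < n)%N ->
  (\sum_(l < n) P l * (k == l))%N = P k.
Proof.
move=> kn; rewrite (bigD1 (Ordinal kn)) //= eqxx muln1 big1 ?addn0 // => l lk.
by rewrite eq_sym -(inj_eq val_inj) /= in lk; rewrite (negbTE lk) muln0.
Qed.

Lemma box_incl_excl (f s p q : nat) :
  (((f == p) && (s == q)) + ((f < p) && (s < q.+1)) + ((f < p.+1) && (s < q)) =
   ((f < p.+1) && (s < q.+1)) + ((f < p) && (s < q)))%N.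
Proof. by rewrite !ltnS; case: (ltngtP f p) => _; case: (ltngtP s q). Qed.

Section MonomialOrder.
Variable n : nat.
Implicit Types m g : 'X_{1..n}.

Lemma submUUK m (i j : 'I_n) : i != j -> (0 < m i)%N -> (0 < m j)%N ->
  m = (m - (U_(i) + U_(j)) + U_(i) + U_(j))%MM.
Proof.
move=> ij mi mj; rewrite -addmA submK //; apply/mnm_lepP => k.
rewrite mnmDE !mnm1E; case: (eqVneq i k) => [<-|_]; last by case: eqP => // <-.
by rewrite [j == i]eq_sym (negbTE ij).
Qed.

Lemma ltm_addU (i j k l : 'I_n) : (i < j)%N -> (i < k)%N -> (i < l)%N ->
  ((U_(k) + U_(l))%MM < (U_(i) + U_(j))%MM)%O.
Proof.
move=> ij ik il; apply/ltmcP; first by rewrite !mdegD !mdeg1.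
have neq (x y : 'I_n) : (x < y)%N -> (y == x) = false := @gtn_eqF x y.
exists i => [x xi|]; rewrite !mnmDE !mnm1E; last by rewrite eqxx !neq.
by rewrite !neq // (ltn_trans xi).
Qed.

Variable B : nat.

Definition nabove g := #|[set m : 'X_{1..n < B} | (g < bmnm m)%O]|.

Lemma nabove_ltn g1 g2 : (g1 < g2)%O -> (mdeg g2 < B)%N -> (nabove g2 < nabove g1)%N.
Proof.
move=> lt12 b2; apply/proper_card/properP; split.
  by apply/subsetP => m; rewrite !inE => /(lt_trans lt12).
by exists (BMultinom b2); rewrite !inE //= ltxx.
Qed.

Lemma nabove_inj g1 g2 : nabove g1 = nabove g2 ->
  (mdeg g1 < B)%N -> (mdeg g2 < B)%N -> g1 = g2.
Proof.
move=> e b1 b2; case: (ltgtP g1 g2) => // lt.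
  by move: (nabove_ltn lt b2); rewrite e ltnn.
by move: (nabove_ltn lt b1); rewrite e ltnn.
Qed.

End MonomialOrder.

(* Variable [v] is the Plücker coordinate of a 2 x 5 matrix on its columns
   [col1 v] < [col2 v]: [x_ij] sits on columns [i-1, j-1] and [x_i] on
   columns [i-1, 4], so that the rows of [pterm] are the Plücker relations. *)
Definition col1 (v : 'I_10) : nat :=
  match val v with 0 => 0 | 1 => 1 | 2 => 2 | 3 => 3
  | 4 | 5 | 6 => 0 | 7 | 8 => 1 | _ => 2 end.
Definition col2 (v : 'I_10) : nat :=
  match val v with 0 | 1 | 2 | 3 => 4 | 4 => 1 | 5 | 7 => 2 | _ => 3 end.

Lemma col1_lt5 v : (col1 v < 5)%N.
Proof. by case: v => [[|[|[|[|[|[|[|[|[|[|]]]]]]]]]] ]. Qed.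
Lemma col2_lt5 v : (col2 v < 5)%N.
Proof. by case: v => [[|[|[|[|[|[|[|[|[|[|]]]]]]]]]] ]. Qed.
Lemma col1_neq_col2 v : col1 v != col2 v.
Proof. by case: v => [[|[|[|[|[|[|[|[|[|[|]]]]]]]]]] ]. Qed.

Definition vars := [:: x1; x2; x3; x4; x12; x13; x14; x23; x24; x34].
Definition prows : seq 'I_5 :=
  [:: @Ordinal 5 0 isT; @Ordinal 5 1 isT; @Ordinal 5 2 isT; @Ordinal 5 3 isT;
      @Ordinal 5 4 isT].
Definition pterms := [:: k0; k1; k2].

Lemma mem_vars v : v \in vars.
Proof. by case: v => [[|[|[|[|[|[|[|[|[|[|//]]]]]]]]]] ?]. Qed.
Lemma mem_pterms k : k \in pterms.
Proof. by case: k => [[|[|[|//]]] ?]. Qed.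

Section Straightening.
Local Open Scope nat_scope.
Variables (rk : nat -> nat) (zv : 'I_10).
Implicit Types (v w : 'I_10) (m : 'X_{1..10}).

Definition top v := if rk (col1 v) < rk (col2 v) then col1 v else col2 v.
Definition bot v := if rk (col1 v) < rk (col2 v) then col2 v else col1 v.

Definition vle v w := (rk (top v) <= rk (top w)) && (rk (bot v) <= rk (bot w)).
Definition vcomparable v w := vle v w || vle w v.

Definition standard m :=
  (m zv == 0) && [forall v, forall w, (0 < m v) && (0 < m w) ==> vcomparable v w].

(* [weight] is the termination measure of straightening: [straightening_cert]
   checks that each incomparable pair occurs in a Plücker relation whose two
   other terms weigh strictly less. *)
Definition weight v := (rk (bot v) - rk (top v)) ^ 2.
Definition mweight m := \sum_(v < 10) m v * weight v.

Definition straightens v w r k :=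
  ((pterm r k == (v, w)) || (pterm r k == (w, v))) &&
  all (fun k' => (k' != k) ==>
    (weight (pterm r k').1 + weight (pterm r k').2 < weight v + weight w)) pterms.

Definition straightening_cert :=
  all (fun v => all (fun w => [&& v != zv, w != zv & ~~ vcomparable v w] ==>
    has (fun r => has (straightens v w r) pterms) prows) vars) vars.

Lemma mweightD m1 m2 : mweight (m1 + m2)%MM = mweight m1 + mweight m2.
Proof. by rewrite /mweight -big_split; apply: eq_bigr => v _; rewrite mnmDE mulnDl. Qed.

Lemma mweightU v : mweight U_(v)%MM = weight v.
Proof.
rewrite /mweight (bigD1 v) //= big1 ?addn0 => [|w]; first by rewrite mnm1E eqxx mul1n.
by rewrite mnm1E eq_sym => /negbTE ->.
Qed.

Lemma standardP m v w : standard m -> 0 < m v -> 0 < m w -> vcomparable v w.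
Proof.
by case/andP=> _ /forallP/(_ v)/forallP/(_ w)/implyP h mv mw; apply: h; rewrite mv.
Qed.

Lemma nonstandard_pair m : m zv = 0 -> ~~ standard m ->
  exists v w, [/\ 0 < m v, 0 < m w, v != zv, w != zv & ~~ vcomparable v w].
Proof.
move=> mz; rewrite /standard mz eqxx /= negb_forall => /existsP [v].
rewrite negb_forall => /existsP [w]; rewrite negb_imply => /andP [/andP [mv mw] vw].
have ne u : 0 < m u -> u != zv by apply: contraTneq => ->; rewrite mz.
by exists v, w; rewrite mv mw !ne.
Qed.

Hypothesis cert : straightening_cert.

Lemma cert_straightens v w : v != zv -> w != zv -> ~~ vcomparable v w ->
  exists r k, [/\ (pterm r k == (v, w)) || (pterm r k == (w, v)) &
    forall k', k' != k ->
      weight (pterm r k').1 + weight (pterm r k').2 < weight v + weight w].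
Proof.
move=> vz wz vw; move/allP: cert => /(_ v (mem_vars v)) /allP /(_ w (mem_vars w)).
rewrite vz wz vw => /hasP [r _ /hasP [k _ /andP [vwk /allP lt]]].
by exists r, k; split=> // k' k'k; move/implyP: (lt k' (mem_pterms k')); apply.
Qed.

Lemma straighten_eq0 (V : zmodType) (g : 'X_{1..10} -> V) : plucker_rel g ->
  (forall m, 0 < m zv -> g m = 0%R) -> (forall m, standard m -> g m = 0%R) ->
  forall m, g m = 0%R.
Proof.
move=> rel gz gst m; have [N] := ubnP (mweight m); elim: N m => // N IH m.
rewrite ltnS => mN; have [mz|/gz//] := posnP (m zv).
have [/gst//|/(nonstandard_pair mz) [v [w [mv mw vz wz vw]]]] := boolP (standard m).
have vw_neq : v != w by apply: contraNneq vw => ->; rewrite /vcomparable /vle !leqnn.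
have [r [k [vwk lt]]] := cert_straightens vz wz vw.
have em := submUUK vw_neq mv mw; set m' := (m - _)%MM in em.
have -> : g m = pshift g r m' k.
  rewrite /pshift em; case/orP: vwk => /eqP -> //=.
  by rewrite -!addmA (addmC U_(v)%MM).
apply: plucker_rel_other => // k' /lt ltw; apply: IH; apply: leq_trans mN.
by rewrite em !mweightD !mweightU -!addnA ltn_add2l.
Qed.

End Straightening.

Section PluckerModel.
Variables (C : numFieldType) (rk : nat -> nat) (zl : nat) (zv y : 'I_10).
Local Notation PP := {mpoly C[10]}.
Implicit Types (t g : 'X_{1..10}) (F : PP).

Definition uvar l : 'I_10 := inord (rk l).
Definition vvar l : 'I_10 := inord (5 + rk l).
Definition killed l := (l == zl) || (l == 3%N).

(* The entries of the 2 x 5 matrix are variables of the ring itself; its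
   first row vanishes on the killed columns. *)
Definition urow l : PP := if killed l then 0 else 'X_(uvar l).
Definition vrow l : PP := 'X_(vvar l).
Definition minor2 i j : PP := urow i * vrow j - urow j * vrow i.
Definition minor v := minor2 (col1 v) (col2 v).

Lemma minor_plucker r :
  minor (pterm r k0).1 * minor (pterm r k0).2
  - minor (pterm r k1).1 * minor (pterm r k1).2
  + minor (pterm r k2).1 * minor (pterm r k2).2 = 0.
Proof.
rewrite /minor /minor2; move: (urow 0) (urow 1) (urow 2) (urow 3) (urow 4)
  (vrow 0) (vrow 1) (vrow 2) (vrow 3) (vrow 4) => u0 u1 u2 u3 u4 w0 w1 w2 w3 w4.
by case: r => [[|[|[|[|[|//]]]]] ?] /=; ring.
Qed.

Definition mminor t : PP := \prod_(v < 10) minor v ^+ t v.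

Lemma mminor_addU t v : mminor (t + U_(v))%MM = mminor t * minor v.
Proof.
rewrite /mminor (bigD1 v) //= [in RHS](bigD1 v) //= mnmDE mnm1E eqxx addn1 exprS.
rewrite (eq_bigr (fun w => minor w ^+ t w)) => [|w wv]; first by rewrite -mulrA [LHS]mulrC.
by rewrite mnmDE mnm1E eq_sym (negbTE wv) addn0.
Qed.

Definition solcoef n g t : C := if mdeg t == n then (mminor t)@_g else 0.

(* With the matrix entries renamed apart as [u], [sol n g] is the coefficient
   of [u^g] in [(\sum_v x_v * minor v)^n / n!]. *)
Definition sol n g : PP :=
  \sum_(t : 'X_{1..10 < n.+1}) (solcoef n g t / (mfact t)%:R) *: 'X_[t].

Lemma tcoef_sol n g t : tcoef (sol n g) t = solcoef n g t.
Proof.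
rewrite /tcoef; have [tn|tn] := ltnP (mdeg t) n.+1.
  by rewrite (mcoeff_mpoly (fun t => solcoef n g t / (mfact t)%:R)) // divfK ?mfactr_neq0.
rewrite raddf_sum big1 ?mul0r => [|[s sn] _ /=].
  by rewrite /solcoef; case: eqP => // e; rewrite e ltnn in tn.
rewrite mcoeffZ mcoeffX; case: eqP => [e|]; last by rewrite mulr0.
by rewrite e ltnNge tn in sn.
Qed.

Lemma sol_annihilated n g : annihilated (sol n g).
Proof.
apply/annihilatedE => r m; rewrite /pshift !tcoef_sol /solcoef !mdegD !mdeg1.
case: eqP => _; last by rewrite subrr addr0.
rewrite !mminor_addU -!mcoeffB -mcoeffD -!mulrA -mulrBr -mulrDr.
by rewrite minor_plucker mulr0 mcoeff0.
Qed.

Hypothesis zv_killed : killed (col1 zv) && killed (col2 zv).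

Lemma minor_zv : minor zv = 0.
Proof.
by move: zv_killed; rewrite /minor /minor2 /urow => /andP [-> ->]; rewrite !mul0r subrr.
Qed.

Lemma mminor_zv t : (0 < t zv)%N -> mminor t = 0.
Proof.
move=> tz; rewrite /mminor (bigD1 zv) //= minor_zv expr0n.
by rewrite (negbTE (lt0n_neq0 tz)) mul0r.
Qed.

Lemma msupp_sol n g t : t \in msupp (sol n g) -> t zv = 0%N /\ mdeg t = n.
Proof.
rewrite mcoeff_msupp -tcoef_eq0 tcoef_sol /solcoef.
have [-> tg|_] := eqVneq (mdeg t) n; last by rewrite eqxx.
split=> //; apply/eqP; rewrite eqn0Ngt.
by apply: contraNN tg => /mminor_zv ->; rewrite mcoeff0.
Qed.

Lemma sol_indep n g : indep_of zv (sol n g).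
Proof. by move=> t /msupp_sol []. Qed.

Hypothesis y_cols : ~~ killed (col1 y) && (col2 y == 3%N).

Definition ylead := (U_(uvar (col1 y)) + U_(vvar 3))%MM.

Lemma minor_y : minor y = 'X_[ylead].
Proof.
case/andP: y_cols => ky /eqP y3.
by rewrite /minor /minor2 /urow y3 (negbTE ky) [killed 3]orbT mul0r subr0 mpolyXD.
Qed.

Lemma mderiv_sol n g : mderiv y (sol n.+1 (g + ylead)) = sol n g.
Proof.
apply: tcoefP => t; rewrite tcoef_mderiv !tcoef_sol /solcoef mdegD mdeg1 addn1 eqSS.
by rewrite mminor_addU minor_y addmC mcoeffMX.
Qed.

Hypothesis rk_lt5 : {homo rk : l / (l < 5)%N}.
Hypothesis rk_inj : {in gtn 5%N &, injective rk}.
Hypothesis top_alive : forall v, v != zv -> ~~ killed (top rk v).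

Local Notation top := (top rk).
Local Notation bot := (bot rk).

Lemma uvarE l : (l < 5)%N -> uvar l = rk l :> nat.
Proof. by move=> h; rewrite /uvar inordK // (leq_trans (rk_lt5 h)). Qed.

Lemma vvarE l : (l < 5)%N -> vvar l = (5 + rk l)%N :> nat.
Proof. by move=> h; rewrite /vvar inordK // ltn_add2l rk_lt5. Qed.

Lemma mlead_minor2 i j : (i < 5)%N -> (j < 5)%N -> ~~ killed i ->
  (rk i < rk j)%N -> mlead (minor2 i j) = (U_(uvar i) + U_(vvar j))%MM.
Proof.
move=> i5 j5 ki ij; rewrite /minor2 /urow (negbTE ki) /vrow.
case: ifP => _; first by rewrite mul0r subr0 -mpolyXD mleadXm.
have ui_vvar l : (l < 5)%N -> (uvar i < vvar l)%N.
  by move=> l5; rewrite uvarE // vvarE // (leq_trans (rk_lt5 i5)) ?leq_addr.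
by rewrite -!mpolyXD mleadDl ?mleadN !mleadXm // ltm_addU ?ui_vvar // !uvarE.
Qed.

Definition lterm v := (U_(uvar (top v)) + U_(vvar (bot v)))%MM.

Lemma top_lt5 v : (top v < 5)%N.
Proof. by rewrite /top; case: ifP; rewrite ?col1_lt5 ?col2_lt5. Qed.

Lemma bot_lt5 v : (bot v < 5)%N.
Proof. by rewrite /bot; case: ifP; rewrite ?col1_lt5 ?col2_lt5. Qed.

Lemma mlead_minor v : v != zv -> mlead (minor v) = lterm v.
Proof.
move=> vz; have := top_alive vz; rewrite /lterm /minor /top /bot.
have c1 := col1_lt5 v; have c2 := col2_lt5 v.
case: ltnP => [lt12 alive|le21 alive]; first exact: mlead_minor2.
rewrite -[minor2 _ _]opprK mleadN opprB mlead_minor2 // ltn_neqAle le21 andbT.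
by apply: contraNneq (col1_neq_col2 v) => /rk_inj ->.
Qed.

Lemma minor_neq0 v : v != zv -> minor v != 0.
Proof.
move=> vz; apply/eqP => v0; move: (mlead_minor vz); rewrite v0 mlead0 /lterm.
by move/esym/eqP; rewrite mnmD_eq0 mnm1_eq0.
Qed.

Definition lexp t := (\sum_(v < 10) mlead (minor v ^+ t v))%MM.

Lemma mminor_lexp t : t zv = 0%N -> (mminor t)@_(lexp t) != 0.
Proof.
move=> tz; rewrite /mminor /lexp mleadc_prod; apply/prodf_neq0 => v _.
rewrite mleadc_eq0; have [->|vz] := eqVneq v zv; first by rewrite tz oner_neq0.
by rewrite expf_neq0 // minor_neq0.
Qed.

Lemma mminor_coef_le t g : (mminor t)@_g != 0 -> (g <= lexp t)%O.
Proof.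
by rewrite -mcoeff_msupp => /msupp_le_mlead /le_trans; apply; apply: mlead_prod_le.
Qed.

Lemma lexpE t i : t zv = 0%N -> lexp t i = (\sum_(v < 10) t v * lterm v i)%N.
Proof.
move=> tz; rewrite /lexp mnm_sumE; apply: eq_bigr => v _.
have [->|vz] := eqVneq v zv; first by rewrite tz expr0 mlead1 mnm0E.
by rewrite mleadX ?minor_neq0 // mlead_minor // mulmnE mulnC.
Qed.

Lemma mdeg_lexp t : t zv = 0%N -> mdeg (lexp t) = (2 * mdeg t)%N.
Proof.
move=> tz; rewrite /lexp mdeg_sum mdegE big_distrr; apply: eq_bigr => v _ /=.
have [->|vz] := eqVneq v zv; first by rewrite tz expr0 mlead1 mdeg0 muln0.
by rewrite mleadX ?minor_neq0 // mdegMn mlead_minor // /lterm mdegD !mdeg1 mulnC.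
Qed.

Lemma uvar_neq_vvar l l' : (l < 5)%N -> (l' < 5)%N -> (uvar l == vvar l') = false.
Proof.
move=> l5 l'5; apply/negbTE/eqP => /(congr1 (@nat_of_ord 10)).
by rewrite uvarE // vvarE // => e; move: (rk_lt5 l5); rewrite e ltnNge leq_addr.
Qed.

Lemma eq_uvar l l' : (l < 5)%N -> (l' < 5)%N -> (uvar l == uvar l') = (l == l').
Proof.
move=> l5 l'5; apply/eqP/eqP => [/(congr1 (@nat_of_ord 10))|-> //].
by rewrite !uvarE //; apply: rk_inj.
Qed.

Lemma eq_vvar l l' : (l < 5)%N -> (l' < 5)%N -> (vvar l == vvar l') = (l == l').
Proof.
move=> l5 l'5; apply/eqP/eqP => [/(congr1 (@nat_of_ord 10))|-> //].
by rewrite !vvarE // => /addnI; apply: rk_inj.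
Qed.

Lemma lterm_uvar v l : (l < 5)%N -> lterm v (uvar l) = (top v == l).
Proof.
move=> l5; rewrite mnmDE !mnm1E eq_uvar ?top_lt5 //.
by rewrite [vvar _ == _]eq_sym uvar_neq_vvar ?bot_lt5 ?addn0.
Qed.

Lemma lterm_vvar v l : (l < 5)%N -> lterm v (vvar l) = (bot v == l).
Proof. by move=> l5; rewrite mnmDE !mnm1E eq_vvar ?bot_lt5 // uvar_neq_vvar ?top_lt5. Qed.

Local Open Scope nat_scope.

(* For standard [t], these counts are determined by the rank contents of the
   two rows, which [lexp t] records, and they determine [t] by
   inclusion-exclusion. *)
Definition ncols t p q := \sum_(v < 10) t v * ((rk (top v) < p) && (rk (bot v) < q)).

Lemma ncols_top t p : t zv = 0 ->
  \sum_(l < 5) (rk l < p) * lexp t (uvar l) = ncols t p 5.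
Proof.
move=> tz; rewrite (eq_bigr (fun l : 'I_5 => \sum_v t v * ((rk l < p) * (top v == l)))).
  rewrite exchange_big; apply: eq_bigr => v _ /=.
  by rewrite -big_distrr (sum_ord_eq (fun l => rk l < p)) ?top_lt5 // rk_lt5 ?bot_lt5 ?andbT.
move=> l _; rewrite lexpE // big_distrr; apply: eq_bigr => v _.
by rewrite lterm_uvar // mulnCA.
Qed.

Lemma ncols_bot t q : t zv = 0 ->
  \sum_(l < 5) (rk l < q) * lexp t (vvar l) = ncols t 5 q.
Proof.
move=> tz; rewrite (eq_bigr (fun l : 'I_5 => \sum_v t v * ((rk l < q) * (bot v == l)))).
  rewrite exchange_big; apply: eq_bigr => v _ /=.
  by rewrite -big_distrr (sum_ord_eq (fun l => rk l < q)) ?bot_lt5 // rk_lt5 ?top_lt5.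
move=> l _; rewrite lexpE // big_distrr; apply: eq_bigr => v _.
by rewrite lterm_vvar // mulnCA.
Qed.

Lemma leq_ncols t p q p' q' : (forall v, 0 < t v ->
    rk (top v) < p -> rk (bot v) < q -> rk (top v) < p' /\ rk (bot v) < q') ->
  ncols t p q <= ncols t p' q'.
Proof.
move=> h; apply: leq_sum => v _; have [->|tv] := posnP (t v); first by [].
by apply: leq_mul => //; case: andP => // -[tp bq]; case: (h v tv tp bq) => -> ->.
Qed.

Lemma ncols_standard t p q : standard rk zv t ->
  ncols t p q = minn (ncols t p 5) (ncols t 5 q).
Proof.
move=> st; have r5 v : rk (top v) < 5 /\ rk (bot v) < 5.
  by rewrite !rk_lt5 ?top_lt5 ?bot_lt5.
have le_pq : ncols t p q <= minn (ncols t p 5) (ncols t 5 q).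
  by rewrite leq_min !leq_ncols // => v _ tp bq; case: (r5 v).
apply/eqP; rewrite eqn_leq le_pq /=.
have [/existsP [v /and3P [tv tp qb]] | /existsPn none] :=
  boolP [exists v, [&& 0 < t v, rk (top v) < p & q <= rk (bot v)]].
  rewrite geq_min; apply/orP; right; apply: leq_ncols => w tw _ bq; split=> //.
  case/orP: (standardP st tv tw) => /andP [le_top le_bot].
    by move: (leq_trans qb le_bot); rewrite leqNgt bq.
  exact: leq_ltn_trans le_top tp.
rewrite geq_min; apply/orP; left; apply: leq_ncols => w tw tp _; split=> //.
by move: (none w); rewrite tw tp /= -ltnNge.
Qed.

Hypothesis rk_cols_inj : injective (fun v => (rk (top v), rk (bot v))).

Lemma ncols_rec t v :
  t v + ncols t (rk (top v)) (rk (bot v)).+1 + ncols t (rk (top v)).+1 (rk (bot v)) =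
  ncols t (rk (top v)).+1 (rk (bot v)).+1 + ncols t (rk (top v)) (rk (bot v)).
Proof.
have -> : t v = \sum_(w < 10) t w * (w == v).
  by rewrite (bigD1 v) //= eqxx muln1 big1 ?addn0 // => w /negbTE ->; rewrite muln0.
rewrite /ncols -!big_split /=; apply: eq_bigr => w _; rewrite -!mulnDr; congr (_ * _).
by rewrite -(inj_eq rk_cols_inj) xpair_eqE box_incl_excl.
Qed.

Lemma standard_lexp_inj s t : standard rk zv s -> standard rk zv t ->
  lexp s = lexp t -> s = t.
Proof.
move=> ss st est; have sz : s zv = 0 by case/andP: ss => /eqP.
have tz : t zv = 0 by case/andP: st => /eqP.
have eN p q : ncols s p q = ncols t p q.
  by rewrite (ncols_standard p q ss) (ncols_standard p q st) -!ncols_top // -!ncols_bot // est.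
apply/mnmP => v; apply/eqP; have := ncols_rec t v; rewrite -!eN -(ncols_rec s v).
by rewrite -!addnA => /eqP; rewrite eqn_add2r eq_sym.
Qed.

Local Open Scope ring_scope.

Hypothesis cert : straightening_cert rk zv.

Definition integrable F :=
  exists H : PP, [/\ indep_of zv H, annihilated H & mderiv y H = F].

Lemma integrable0 : integrable 0.
Proof.
exists 0; split; [by move=> m; rewrite msupp0 | exact: annihilated0 | exact: mderiv0].
Qed.

Lemma integrable_lin F1 F2 c :
  integrable F1 -> integrable F2 -> integrable (F1 + c *: F2).
Proof.
move=> [H1 [i1 a1 d1]] [H2 [i2 a2 d2]]; exists (H1 + c *: H2); split.
- exact: indep_of_lin.
- exact: annihilated_lin.
- by rewrite mderivD mderivZ d1 d2.
Qed.

Lemma integrable_sol n g : integrable (sol n g).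
Proof.
exists (sol n.+1 (g + ylead)); split; [exact: sol_indep | exact: sol_annihilated |].
exact: mderiv_sol.
Qed.

Lemma eq0_of_standard F : annihilated F -> indep_of zv F ->
  (forall t, standard rk zv t -> tcoef F t = 0) -> F = 0.
Proof.
move=> /annihilatedE rel indep st; apply: tcoefP => m; rewrite tcoef0.
apply: (straighten_eq0 cert rel) => // {}m mz; apply/eqP; rewrite tcoef_eq0 mcoeff_eq0.
by apply: contraTN mz => /indep ->.
Qed.

Lemma tcoef_sol_lexp s : standard rk zv s -> tcoef (sol (mdeg s) (lexp s)) s != 0.
Proof. by case/andP=> /eqP sz _; rewrite tcoef_sol /solcoef eqxx mminor_lexp. Qed.

Lemma tcoef_sol_standard s t : standard rk zv s -> standard rk zv t ->
  tcoef (sol (mdeg s) (lexp s)) t != 0 ->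
  t = s \/ (lexp s < lexp t)%O /\ mdeg t = mdeg s.
Proof.
move=> ss st; rewrite tcoef_sol /solcoef.
have [dt|_] := eqVneq (mdeg t) (mdeg s); last by rewrite eqxx.
move=> /mminor_coef_le; rewrite le_eqVlt => /orP [/eqP e|lt]; last by right.
by left; apply: standard_lexp_inj st ss (esym e).
Qed.

Lemma integrable_of_nabove D k F : annihilated F -> indep_of zv F ->
  (forall m, m \in msupp F -> mdeg m <= D)%N ->
  (forall t, standard rk zv t -> tcoef F t != 0 -> (nabove (2 * D).+1 (lexp t) < k)%N) ->
  integrable F.
Proof.
elim: k F => [|k IH] F aF iF dF hF.
  suff -> : F = 0 by exact: integrable0.
  by apply: eq0_of_standard => // t st; apply/eqP; apply: contraT => /(hF t st).
have supp t : tcoef F t != 0 -> t \in msupp F by rewrite tcoef_eq0 mcoeff_msupp.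
have lexp_lt t : standard rk zv t -> (mdeg t <= D)%N -> (mdeg (lexp t) < (2 * D).+1)%N.
  by case/andP=> /eqP tz _ tD; rewrite mdeg_lexp // ltnS leq_mul2l tD orbT.
have [/hasP [s /dF sD /and3P [ss Fs /eqP sk]] | /hasPn none] := boolP (has (fun s =>
    [&& standard rk zv s, tcoef F s != 0 & nabove (2 * D).+1 (lexp s) == k]) (msupp F));
  last first.
  apply: IH => // t st Ft; move: (hF t st Ft) (none t (supp t Ft)).
  by rewrite st Ft ltnS leq_eqVlt => /orP [->|].
(* [s] minimizes [lexp] on the standard support of [F]: subtracting a multiple
   of [sol (mdeg s) (lexp s)] kills the coefficient at [s] and only creates
   standard coefficients of larger [lexp]. *)
set E := sol (mdeg s) (lexp s); set lam := tcoef F s / tcoef E s.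
rewrite -[F](addrNK (lam *: E)) -scaleNr; apply: integrable_lin; last exact: integrable_sol.
apply: IH => [||m|t st].
- exact/annihilated_lin/sol_annihilated.
- exact/indep_of_lin/sol_indep.
- by move=> /msuppD_le; rewrite mem_cat => /orP [/dF // | /msuppZ_le /msupp_sol [_ ->]].
rewrite tcoefD tcoefZ; have [->|ts] := eqVneq t s.
  by rewrite mulNr divfK ?tcoef_sol_lexp // subrr eqxx.
have [Et|/(tcoef_sol_standard ss st) [/eqP|[lt dt]]] := eqVneq (tcoef E t) 0; last 2 first.
- by rewrite (negbTE ts).
- by move=> _; rewrite -sk nabove_ltn // lexp_lt // dt.
rewrite Et mulr0 addr0 => Ft; have := hF t st Ft; rewrite ltnS leq_eqVlt.
case/orP=> [/eqP tk|//]; case/eqP: ts; apply: (standard_lexp_inj st ss).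
apply: nabove_inj (etrans tk (esym sk)) (lexp_lt _ st _) (lexp_lt _ ss sD).
exact/dF/supp.
Qed.

Lemma annihilated_integrable F : annihilated F -> indep_of zv F -> integrable F.
Proof.
move=> aF iF; pose B := #|{: 'X_{1..10 < (2 * msize F).+1}}|.
apply: (@integrable_of_nabove (msize F) B.+1) => // [m /msize_mdeg_lt /ltnW //|t _ _].
by rewrite ltnS max_card.
Qed.

End PluckerModel.

Lemma forall_vars (P : pred 'I_10) : all P vars -> forall v, P v.
Proof. by move=> /allP h v; apply/h/mem_vars. Qed.

(* The killed columns [zl] and [3] get the two largest ranks, so that every
   variable other than x_a4 has an alive top column. *)
Definition rank zl l := if l == 3%N then 4%N
  else if l == zl then 3%N else (l - (zl < l) - (3 < l))%N.

Lemma rank_lt5 zl : {homo rank zl : l / (l < 5)%N}.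
Proof.
move=> l l5; rewrite /rank; case: ifP => // _; case: ifP => // _.
by rewrite (leq_ltn_trans _ l5) // (leq_trans (leq_subr _ _)) ?leq_subr.
Qed.

Definition admissible zl zv y := [&&
  all (fun l => all (fun l' => (rank zl l == rank zl l') ==> (l == l')) (iota 0 5))
    (iota 0 5),
  killed zl (col1 zv) && killed zl (col2 zv), ~~ killed zl (col1 y) && (col2 y == 3%N),
  all (fun v => (v != zv) ==> ~~ killed zl (top (rank zl) v)) vars,
  all (fun v => all (fun w => (v != w) ==>
    ((rank zl (top (rank zl) v), rank zl (bot (rank zl) v)) !=
     (rank zl (top (rank zl) w), rank zl (bot (rank zl) w)))) vars) vars
  & straightening_cert (rank zl) zv].

Lemma admissible_integrable (C : numFieldType) zl zv y (F : {mpoly C[10]}) :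
  admissible zl zv y -> indep_of zv F -> annihilated F ->
  exists Q : {mpoly C[10]}, [/\ indep_of zv Q, mderiv y Q = F & annihilated Q].
Proof.
case/and5P=> /allP rinj zkill ycols /forall_vars alive /andP [/forall_vars cinj cert] iF aF.
have rk_inj : {in gtn 5%N &, injective (rank zl)}.
  have in5 l : (l < 5)%N -> l \in iota 0 5 by rewrite mem_iota.
  move=> l l'; rewrite !inE => /in5 l5 /in5 l'5 e; apply/eqP.
  by move/allP: (rinj l l5) => /(_ l' l'5) /implyP; apply; rewrite e.
have top_alive v : v != zv -> ~~ killed zl (top (rank zl) v).
  by move/implyP: (alive v); apply.
have cols_inj : injective (fun v => (rank zl (top (rank zl) v), rank zl (bot (rank zl) v))).
  move=> v w e; have [//|vw] := eqVneq v w.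
  by move/forall_vars/(_ w)/implyP: (cinj v) => /(_ vw); rewrite e eqxx.
have [H [iH aH dH]] := annihilated_integrable zkill ycols (@rank_lt5 zl) rk_inj top_alive
  cols_inj cert aF iF.
by exists H.
Qed.

Theorem mainTheorem8 (R : realType) (a b : nat)
  (ha : (1 <= a <= 3)%N) (hb : (1 <= b <= 3)%N) (hab : a <> b)
  (P : {mpoly R[i][10]}) :
  indep_of (vxx a 4) P -> annihilated P ->
  exists Q : {mpoly R[i][10]},
    [/\ indep_of (vxx a 4) Q, d2 b 4 Q = P & annihilated Q].
Proof.
apply: (@admissible_integrable _ a.-1).
by case: a ha hab => [|[|[|[|a]]]] // _; case: b hb => [|[|[|[|b]]]] // _ hab //; rewrite !vxE.
Qed.
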